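(* Let $\mathcal{D}$ be a set of routing problem instances, and for each $\mathcal{P}\in\mathcal{D}$ let $C=C(\mathcal{P})\subseteq\Pi$ be its (finite, nonempty) feasible set, $f(\cdot;\mathcal{P})$ its objective, $f^*(\mathcal{P})=\min_{\pi\in C}f(\pi;\mathcal{P})$, $\Pi^*=\Pi^*(\mathcal{P})$ its set of optimal solutions, and $q_\lambda(\cdot;\mathcal{P})$ the constrained Gibbs distribution defined in the context. Suppose that for a parameterized family of distributions $\{p_\theta(\cdot;\mathcal{P})\}_\theta$ on $\Pi$ the approximation error $\delta(\lambda):=\min_\theta\max_{\mathcal{P}\in\mathcal{D}}\mathrm{KL}(p_\theta(\cdot;\mathcal{P})\,\|\,q_\lambda(\cdot;\mathcal{P}))$ satisfies $\delta(\lambda)\le c/\lambda$ for all $\lambda>0$, for some constant $c$, and let $\theta^*(\lambda)$ be a minimizer attaining $\delta(\lambda)$. Define $\Delta(\mathcal{P}):=\min_{\pi\in C\setminus\Pi^*}f(\pi;\mathcal{P})-f^*(\mathcal{P})$. Then for any $\mathcal{P}\in\mathcal{D}$, any $\epsilon>0$ and any $\lambda$ with $\Delta(\mathcal{P})\ge\lambda>0$, $$\mathbb{P}_{\pi\sim p_{\theta^*(\lambda)}(\cdot;\mathcal{P})}\big(f(\pi;\mathcal{P})\ge f^*(\mathcal{P})+\epsilon\big)\le \frac{|C|\,\Delta(\mathcal{P})\,e^{-\Delta(\mathcal{P})/\lambda}}{|\Pi^*|\max\{\epsilon,\Delta(\mathcal{P})\}}+\sqrt{\frac{c}{2\lamb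da}}.$$
   Context: Routes are elements of the finite set $\Pi=V^T$ with $V=\{0,1,\dots,n\}$. For an instance $\mathcal{P}$, the feasible set is $C=\{\pi\in\Pi: c(\pi;\mathcal{P})\le 0,\ d(\pi;\mathcal{P})=0\}$ for constraint functions $c,d$. The constrained Gibbs distribution with temperature $\lambda>0$ is $q_\lambda(\pi;\mathcal{P})=\frac{1}{Z_\lambda}\exp\!\big(-\frac{f(\pi;\mathcal{P})-f^*(\mathcal{P})}{\lambda}\big)\mathbf{1}_C(\pi)$, where $Z_\lambda=\sum_{\pi\in C}\exp(-(f(\pi;\mathcal{P})-f^*(\mathcal{P}))/\lambda)$. For distributions $P,Q$ on a finite set with $\mathrm{supp}(P)\subseteq\mathrm{supp}(Q)$, $\mathrm{KL}(P\|Q)=\mathbb{E}_{x\sim P}[\log(P(x)/Q(x))]$. *)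

From HB Require Import structures.
From mathcomp Require Import all_boot all_order all_algebra.
From mathcomp Require Import all_classical all_reals all_analysis.
Set Implicit Arguments. Unset Strict Implicit. Unset Printing Implicit Defensive.
Import Order.TTheory GRing.Theory Num.Theory.
Local Open Scope ring_scope.

Section Routing.
Variable R : realType.

Definition route (n T : nat) := {ffun 'I_T -> 'I_n.+1}.

Definition feasible (n T mc md : nat)
  (c : route n T -> 'rV[R]_mc) (d : route n T -> 'rV[R]_md) : {set route n T} :=
  [set pi | [forall i, c pi 0 i <= 0] && (d pi == 0)].

(* Minimum of f over a finite set A (0 by convention if A is empty). *)
Definition fmin (X : finType) (A : {set X}) (f : X -> R) : R :=
  if [pick x in A] is Some x0 then \big[Num.min/f x0]_(x in A) f x else 0.

Definition fstar (X : finType) (C : {set X}) (f : X -> R) : R := fmin C f.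

Definition optset (X : finType) (C : {set X}) (f : X -> R) : {set X} :=
  [set x in C | f x == fstar C f].

Definition gap (X : finType) (C : {set X}) (f : X -> R) : R :=
  fmin (C :\: optset C f) f - fstar C f.

Definition partfun (X : finType) (C : {set X}) (f : X -> R) (lam : R) : R :=
  \sum_(x in C) expR (- (f x - fstar C f) / lam).

Definition gibbs (X : finType) (C : {set X}) (f : X -> R) (lam : R) (x : X) : R :=
  if x \in C then expR (- (f x - fstar C f) / lam) / partfun C f lam else 0.

Definition is_distr (X : finType) (p : X -> R) : Prop :=
  (forall x, 0 <= p x) /\ \sum_(x : X) p x = 1.

Definition KL (X : finType) (p q : X -> R) : \bar R :=
  if [forall x, (p x != 0) ==> (q x != 0)]
  then (\sum_(x | p x != 0) p x * ln (p x / q x))%:E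
  else +oo%E.

End Routing.

From HB Require Import structures.
From mathcomp Require Import all_boot all_order all_algebra.
From mathcomp Require Import all_classical all_reals all_analysis.
From mathcomp Require Import ring lra.
Import Order.TTheory GRing.Theory Num.Theory.
Local Open Scope ring_scope.

(* Routes whose cost exceeds f* + eps are suboptimal, so their cost exceeds
   f* + M with M = max(eps, Delta); the Gibbs distribution gives each of them
   mass at most e^(-M/lam) / |Pi*|, since the partition function is at least
   |Pi*|.  As t e^(-t/lam) decreases for t >= lam, the total Gibbs mass of the
   event is at most |C| Delta e^(-Delta/lam) / (|Pi*| M).  The trained
   distribution is within KL divergence c/lam of the Gibbs distribution, so by
   Pinsker's inequality for a single event it gives the event at most
   sqrt(c/(2 lam)) more mass.  That inequality reduces, by the log-sum
   inequality, to two-point distributions, where it is a monotonicity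
   argument in one real variable. *)

Section Pinsker.
Context {R : realType}.

Lemma sum_support (X : finType) (p : X -> R) (S : pred X) :
  \sum_(x | S x) p x = \sum_(x | (p x != 0) && S x) p x.
Proof.
rewrite (bigID (fun x => p x != 0)) /= [X in _ + X]big1 ?addr0.
  by apply: eq_bigl => x; rewrite andbC.
by move=> x /andP[_ /negPn/eqP].
Qed.

Lemma sum_gt0_support (X : finType) (p q : X -> R) (S : pred X) :
  (forall x, 0 <= p x) -> (forall x, 0 <= q x) ->
  (forall x, p x != 0 -> q x != 0) ->
  0 < \sum_(x | S x) p x -> 0 < \sum_(x | S x) q x.
Proof.
move=> p0 q0 supp /lt0r_neq0/eqP/(psumr_neq0P (fun x _ => p0 x)).
case=> x /andP[Sx px_gt0].
have qx_gt0 : 0 < q x by rewrite lt0r supp ?q0 ?lt0r_neq0.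
by apply: lt_le_trans qx_gt0 _; rewrite (bigD1 x) //= lerDl sumr_ge0.
Qed.

Lemma subr_mul_le_mul_ln_div (a b t : R) : 0 < a -> 0 < b -> 0 < t ->
  a - b * t <= a * (ln (a / b) - ln t).
Proof.
move=> a0 b0 t0; have y0 : 0 < b * t / a by rewrite divr_gt0 ?mulr_gt0.
have := @le_ln1Dx R (b * t / a - 1); rewrite addrCA subrr addr0 => /(_ ltac:(lra)).
rewrite !ln_div ?lnM ?posrE ?mulr_gt0 // -(ler_pM2l a0) !mulrBr mulr1 mulrCA.
rewrite divff ?gt_eqF // mulr1; lra.
Qed.

Lemma log_sum_le (X : finType) (p q : X -> R) (S : pred X) :
  (forall x, 0 <= p x) -> (forall x, 0 <= q x) ->
  (forall x, p x != 0 -> q x != 0) ->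
  (\sum_(x | S x) p x) * (ln (\sum_(x | S x) p x) - ln (\sum_(x | S x) q x))
  <= \sum_(x | (p x != 0) && S x) p x * ln (p x / q x).
Proof.
move=> p0 q0 supp; set a := \sum_(x | S x) p x; set b := \sum_(x | S x) q x.
have [a_eq0|a_gt0] := eqVneq a 0.
  rewrite a_eq0 mul0r big_pred0 // => x; apply/negbTE/negP => /andP[/eqP px Sx].
  exact/px/(psumr_eq0P (fun x _ => p0 x) a_eq0).
have {}a_gt0 : 0 < a by rewrite lt0r a_gt0 sumr_ge0.
have b_gt0 : 0 < b by apply: sum_gt0_support a_gt0.
have pointwise x : (p x != 0) && S x ->
    p x - q x * (a / b) <= p x * ln (p x / q x) - p x * (ln a - ln b).
  case/andP=> px _; have px_gt0 : 0 < p x by rewrite lt0r px p0.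
  have qx_gt0 : 0 < q x by rewrite lt0r supp ?q0.
  rewrite -mulrBr -[ln a - ln b]ln_div ?posrE //.
  exact: subr_mul_le_mul_ln_div (divr_gt0 _ _).
have sum_q_le : \sum_(x | (p x != 0) && S x) q x <= b.
  rewrite /b [X in _ <= X](bigID (fun x => p x != 0)) /=.
  by rewrite (eq_bigl _ _ (fun x => andbC _ _)) lerDl sumr_ge0.
have -> : a * (ln a - ln b) = \sum_(x | (p x != 0) && S x) p x * (ln a - ln b).
  by rewrite -mulr_suml -sum_support.
rewrite -subr_ge0 -sumrB; apply: le_trans (ler_sum _ pointwise).
rewrite sumrB -!mulr_suml -sum_support -/a subr_ge0.
apply: le_trans (_ : b * (a / b) <= a); last by rewrite mulrC divfK ?gt_eqF.
by rewrite ler_wpM2r // divr_ge0 ?ltW.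
Qed.

Lemma is_derive_ln1B (z : R) :
  z < 1 -> is_derive z 1 (fun x => ln (1 - x)) (- (1 - z)^-1).
Proof.
move=> z1; have dB : is_derive z 1 (fun x : R => 1 - x) (-1).
  by rewrite -[-1]sub0r; apply: is_deriveB.
have dln : is_derive (1 - z) 1 (@ln R) (1 - z)^-1.
  by apply: is_derive1_ln; rewrite subr_gt0.
by have := is_derive1_comp (g := fun x => 1 - x) dln dB; rewrite mulrN1.
Qed.

Definition pinsker_defect (a x : R) :=
  - (a * ln x) - (1 - a) * ln (1 - x) - 2 * (a - x) ^+ 2.

Lemma is_derive_pinsker_defect (a z : R) : 0 < z < 1 ->
  is_derive z 1 (pinsker_defect a) (- ((a - z) * (1 - 2 * z) ^+ 2 / (z * (1 - z)))).
Proof.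
case/andP=> z0 z1.
have dln : is_derive z 1 (a *: @ln R) (a *: z^-1) by apply/is_deriveZ/is_derive1_ln.
have dln1B : is_derive z 1 ((1 - a) *: (fun x => ln (1 - x))) ((1 - a) *: - (1 - z)^-1).
  by apply/is_deriveZ/is_derive_ln1B.
have dsq : is_derive z 1 (2 *: (cst a - id) ^+ 2) (2 *: (2%:R * (a - z) ^+ 1 * (0 - 1))).
  by apply: is_deriveZ; apply: is_deriveX; apply: is_deriveB.
have := is_deriveB (is_deriveB (is_deriveN dln) dln1B) dsq.
rewrite /pinsker_defect => /is_derive_eq; apply.
have scaleE (u v : R) : u *: v = u * v by [].
rewrite !scaleE expr1; field; lra.
Qed.

Lemma pinsker_defect_le (a b : R) : 0 < b -> b <= a -> a <= 1 ->
  pinsker_defect a a <= pinsker_defect a b.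
Proof.
move=> b0 ba a1.
have in01 x : x \in `]b, a[ -> 0 < x < 1.
  by rewrite in_itv /= => /andP[bx xa]; apply/andP; split; lra.
have derivable_in x : x \in `]b, a[ -> derivable (pinsker_defect a) x 1.
  by move=> /in01 /(is_derive_pinsker_defect a) D; apply: ex_derive.
have derive_le0 x : x \in `]b, a[ -> (pinsker_defect a)^`()%classic x <= 0.
  move=> /[dup] /in01 x01; rewrite in_itv /= => /andP[_ xa].
  have D := is_derive_pinsker_defect a x x01; rewrite derive1E derive_val.
  have /andP[x0 x1] := x01.
  by rewrite oppr_le0; apply: divr_ge0; apply: mulr_ge0; rewrite ?sqr_ge0 //; lra.
apply: (ler0_derive1_le_cc derivable_in derive_le0); rewrite ?in_itv /= ?lexx ?ba //.
apply: derivable_within_continuous => x; rewrite in_itv /= => /andP[bx xa].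
have [a_lt1|a_ge1] := ltP a 1.
  have /(is_derive_pinsker_defect a) D : 0 < x < 1 by apply/andP; split; lra.
  exact: ex_derive.
(* At [a = 1] the term [ln (1 - x)], not derivable at [x = 1], has coefficient 0. *)
have -> : a = 1 by apply/le_anti; rewrite a1 a_ge1.
have -> : pinsker_defect 1 = - (@ln R) - (2 : R) *: ((cst 1 - id) ^+ 2 : R -> R).
  by apply/funext => y; rewrite /pinsker_defect subrr !mul0r subr0 mul1r.
have D : is_derive x 1 (@ln R) x^-1 by apply: is_derive1_ln; lra.
exact: ex_derive.
Qed.

Lemma binary_pinsker (a b : R) : 0 < b -> b <= a -> a <= 1 ->
  2 * (a - b) ^+ 2 <= a * (ln a - ln b) + (1 - a) * (ln (1 - a) - ln (1 - b)).
Proof.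
move=> b0 ba a1; have := pinsker_defect_le a b b0 ba a1.
rewrite /pinsker_defect subrr expr0n /= mulr0 !mulrBr; lra.
Qed.

Lemma sum_predC_distr (X : finType) (p : X -> R) (S : pred X) : is_distr p ->
  \sum_(x | ~~ S x) p x = 1 - \sum_(x | S x) p x.
Proof. by case=> _ <-; rewrite [X in _ = X - _](bigID S) /= addrAC subrr add0r. Qed.

Lemma KL_event_le {X : finType} {p q : X -> R} (S : pred X) {k : R} :
  is_distr p -> is_distr q -> (KL p q <= k%:E)%E ->
  \sum_(x | S x) p x <= \sum_(x | S x) q x + Num.sqrt (k / 2).
Proof.
move=> pd qd; rewrite /KL; case: ifP => [/forallP supp|_]; last by rewrite leye_eq.
rewrite lee_fin => KL_le; have [p0 _] := pd; have [q0 _] := qd.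
have {}supp x : p x != 0 -> q x != 0 by apply/implyP/supp.
set a := \sum_(x | S x) p x; set b := \sum_(x | S x) q x.
have [ab|ba] := leP a b; first by rewrite -[a]addr0 lerD ?sqrtr_ge0.
have b_gt0 : 0 < b by apply: sum_gt0_support (le_lt_trans (sumr_ge0 _ _) ba).
have a_le1 : a <= 1 by rewrite -subr_ge0 -sum_predC_distr // sumr_ge0.
have logsum_S := @log_sum_le X p q S p0 q0 supp.
have logsum_notS := @log_sum_le X p q (fun x => ~~ S x) p0 q0 supp.
rewrite -/a -/b in logsum_S; rewrite !sum_predC_distr // -/a -/b in logsum_notS.
have := binary_pinsker a b b_gt0 (ltW ba) a_le1.
rewrite (bigID S) /= in KL_le => pinsker_ab.
have sq_le : (a - b) ^+ 2 <= k / 2 by lra.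
rewrite -lerBlDl -[a - b]ger0_norm ?subr_ge0 ?(ltW ba) // -sqrtr_sqr.
exact: ler_wsqrtr.
Qed.

End Pinsker.

Section Gibbs.
Context {R : realType}.

Lemma mul_expR_Ndiv_le (lam d m : R) : 0 < lam -> lam <= d -> d <= m ->
  m * expR (- m / lam) <= d * expR (- d / lam).
Proof.
move=> lam0 lam_d dm; set t := (m - d) / lam.
have t0 : 0 <= t by apply: divr_ge0; lra.
have m_le : m <= d * expR t.
  have mdE : m - d = t * lam by rewrite divfK ?gt_eqF.
  apply: le_trans (_ : d * (1 + t) <= _); last by rewrite ler_wpM2l ?expR_ge1Dx //; lra.
  nra.
have -> : - m / lam = - d / lam - t by rewrite /t; field; rewrite gt_eqF.
rewrite expRD expRN mulrA ler_pdivrMr ?expR_gt0 // mulrC.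
by rewrite mulrAC [leLHS]mulrC ler_wpM2r ?expR_ge0.
Qed.

Context {X : finType} {C : {set X}} {f : X -> R}.

Lemma fmin_le (A : {set X}) x : x \in A -> fmin A f <= f x.
Proof.
move=> xA; rewrite /fmin; case: pickP => [x0 _|/(_ x)]; last by rewrite xA.
by rewrite (bigD1 x) //= ge_min lexx.
Qed.

Lemma fmin_mem (A : {set X}) : A != finset.set0 -> exists2 x, x \in A & fmin A f = f x.
Proof.
move=> /set0Pn[y yA]; rewrite /fmin; case: pickP => [x0 x0A|/(_ y)]; last by rewrite yA.
apply: (big_ind (fun v => exists2 x, x \in A & v = f x)); first by exists x0.
  move=> _ _ [x1 x1A ->] [x2 x2A ->].
  have [x12|/ltW x21] := leP (f x1) (f x2).
    by exists x1; rewrite ?min_l.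
  by exists x2; rewrite ?min_r.
by move=> x xA; exists x.
Qed.

Hypothesis C_neq0 : C != finset.set0.

Lemma optset_neq0 : optset C f != finset.set0.
Proof.
have [x xC fx] := fmin_mem C C_neq0.
by apply/set0Pn; exists x; rewrite inE xC /fstar fx eqxx.
Qed.

Lemma gap_le x : x \in C -> x \notin optset C f -> fstar C f + gap C f <= f x.
Proof.
move=> xC xopt; rewrite /gap addrC subrK; apply: fmin_le.
by rewrite inE xC xopt.
Qed.

Context {lam : R}.
Hypothesis lam_gt0 : 0 < lam.

Lemma card_optset_le_partfun : #|optset C f|%:R <= partfun C f lam.
Proof.
rewrite /partfun (bigID (mem (optset C f))) /= -[leLHS]addr0 lerD ?sumr_ge0 //.
  rewrite (eq_bigl (mem (optset C f))) => [|x]; last first.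
    by rewrite !inE andb_idl // => /andP[].
  rewrite (eq_bigr (fun=> 1)) => [|x]; first by rewrite sumr_const.
  by move=> /setIdP[_ /eqP ->]; rewrite subrr oppr0 mul0r expR0.
Qed.

Lemma partfun_gt0 : 0 < partfun C f lam.
Proof.
apply: lt_le_trans card_optset_le_partfun.
by rewrite ltr0n card_gt0 optset_neq0.
Qed.

Lemma gibbs_distr : is_distr (gibbs C f lam).
Proof.
have Z_gt0 := partfun_gt0; rewrite /gibbs; split=> [x|].
  by case: ifP => // _; rewrite divr_ge0 ?expR_ge0 ?ltW.
by rewrite -big_mkcond /= -mulr_suml mulfV ?gt_eqF.
Qed.

Lemma gibbs_tail_le eps : 0 < eps -> lam <= gap C f ->
  \sum_(x | fstar C f + eps <= f x) gibbs C f lam x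
  <= #|C|%:R * gap C f * expR (- gap C f / lam)
     / (#|optset C f|%:R * Num.max eps (gap C f)).
Proof.
move=> eps0 lam_gap; set fs := fstar C f; set Delta := gap C f.
set M := Num.max eps Delta; set O := #|optset C f|%:R.
have Delta_gt0 : 0 < Delta by apply: lt_le_trans lam_gap.
have M_gt0 : 0 < M by rewrite lt_max eps0.
have O_gt0 : 0 < O by rewrite ltr0n card_gt0 optset_neq0.
set E := expR (- M / lam).
have pointwise x : fs + eps <= f x -> gibbs C f lam x <= if x \in C then E / O else 0.
  rewrite /gibbs; case: ifP => // xC fx.
  have xopt : x \notin optset C f by rewrite inE xC /= -/fs; apply/eqP; lra.
  have M_le : M <= f x - fs.
    by have := gap_le x xC xopt; rewrite -/fs -/Delta ge_max => ?; apply/andP; split; lra.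
  apply: le_trans (_ : E / partfun C f lam <= _).
    rewrite ler_pM2r ?invr_gt0 ?partfun_gt0 // ler_expR.
    by rewrite ler_pM2r ?invr_gt0 // -/fs; lra.
  by rewrite ler_pM2l ?expR_gt0 // lef_pV2 ?posrE ?partfun_gt0 ?card_optset_le_partfun.
apply: le_trans (ler_sum _ pointwise) _.
apply: le_trans (_ : \sum_x (if x \in C then E / O else 0) <= _).
  rewrite [leRHS](bigID (fun x => fs + eps <= f x)) /= lerDl sumr_ge0 // => x _.
  by case: ifP => // _; rewrite divr_ge0 ?expR_ge0 ?ltW.
rewrite -big_mkcond /= sumr_const -[_ *+ _]mulr_natl -!mulrA ler_wpM2l //.
have -> : E / O = M * E / (O * M) by field; rewrite !gt_eqF.
rewrite mulrA ler_pM2r ?invr_gt0 ?mulr_gt0 //.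
by apply: mul_expR_Ndiv_le => //; rewrite /M le_max lexx orbT.
Qed.

End Gibbs.

Local Open Scope classical_set_scope.

Theorem theorem4p3 (R : realType) (n T mc md : nat)
  (Inst : Type) (D : set Inst)
  (cc : Inst -> route n T -> 'rV[R]_mc) (dd : Inst -> route n T -> 'rV[R]_md)
  (f : Inst -> route n T -> R)
  (Theta : Type) (p : Theta -> Inst -> route n T -> R)
  (c : R) (thetastar : R -> Theta) :
  let C P := feasible (cc P) (dd P) in
  let q lam P := gibbs (C P) (f P) lam in
  let delta lam :=
    ereal_inf [set ereal_sup [set KL (p th P) (q lam P) | P in D] | th in setT] in
  (forall P, D P -> C P != finset.set0) ->
  (forall P, D P -> C P :\: optset (C P) (f P) != finset.set0) ->
  (forall th P, D P -> is_distr (p th P)) ->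
  (forall lam, 0 < lam -> (delta lam <= (c / lam)%:E)%E) ->
  (forall lam, 0 < lam ->
     ereal_sup [set KL (p (thetastar lam) P) (q lam P) | P in D] = delta lam) ->
  forall P, D P -> forall eps lam, 0 < eps -> 0 < lam -> lam <= gap (C P) (f P) ->
    let Delta := gap (C P) (f P) in
    \sum_(pi | f P pi >= fstar (C P) (f P) + eps) p (thetastar lam) P pi
    <= (#|C P|%:R * Delta * expR (- Delta / lam))
         / (#|optset (C P) (f P)|%:R * Num.max eps Delta)
       + Num.sqrt (c / (2 * lam)).
Proof.
(* [C P :\: optset (C P) (f P)] may be empty: [lam <= gap] alone makes
   the gap positive. *)
move=> C q delta C_neq0 _ p_distr delta_le thetastar_opt P DP eps lam.
move=> eps_gt0 lam_gt0 lam_gap /=.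
have KL_le : (KL (p (thetastar lam) P) (q lam P) <= (c / lam)%:E)%E.
  apply: le_trans (delta_le lam lam_gt0); rewrite -thetastar_opt //.
  by apply: ereal_sup_ubound; exists P.
apply: le_trans (KL_event_le _ (p_distr _ _ DP) (gibbs_distr (C_neq0 P DP)) KL_le) _.
have -> : c / (2 * lam) = c / lam / 2 by field; rewrite gt_eqF.
by rewrite lerD2r; exact: (gibbs_tail_le (C_neq0 P DP) lam_gt0 eps eps_gt0 lam_gap).
Qed.
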